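(* Let $\mathrm{Alg}$ be any randomized algorithm for online control, and let $f$ be a function such that the following guarantee holds: for all $d,T\in\mathbb{N}$, all $\alpha_{\mathrm{ub}}\in(0,1)$ with $\mathcal{I}:=\bigcup_{\alpha\in[0,\alpha_{\mathrm{ub}}]}\Delta^d_\alpha$, all $L>0$, and every simplex LDS $\mathcal{L}=(A,B,\mathcal{I},x_1,(\gamma_t)_t,(w_t)_t,(c_t)_t)$ with state space $\Delta^d$ whose cost functions are convex and $L$-Lipschitz (in the sense below), the iterates $(x_t,u_t)_{t=1}^T$ produced by $\mathrm{Alg}$ with input $(A,B,\mathcal{I},T)$ on interaction with $\mathcal{L}$ satisfy $$\mathbb{E}\Big[\sum_{t=1}^Tc_t(x_t,u_t)\Big]-\inf_{K\in\mathcal{K}(\mathcal{I})}\sum_{t=1}^Tc_t(x_t^{\mathcal{L},K},u_t^{\mathcal{L},K})\le f(d,L,\alpha_{\mathrm{ub}},T).$$ Then for any sufficiently large constant $\beta$, setting $\alpha_{\mathrm{ub}}(T):=\beta/T$, we have $f(2,1,\alpha_{\mathrm{ub}}(T),T)=\Omega(T)$.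
   Context: $\Delta^d$ is the probability simplex in $\mathbb{R}^d$, $\Delta^d_\alpha:=\alpha\Delta^d$. $\mathbb{S}^d$ is the set of $d\times d$ column-stochastic matrices and $\mathbb{S}^d_\alpha:=\{\alpha M:M\in\mathbb{S}^d\}$. A simplex LDS on $\Delta^d$ is a tuple $(A,B,\mathcal{I},x_1,(\gamma_t),(w_t),(c_t))$ with $A,B\in\mathbb{S}^d$, valid control set $\mathcal{I}\subseteq\bigcup_{\alpha\in[0,1]}\Delta^d_\alpha$, $x_1\in\Delta^d$, $\gamma_t\in[0,1]$, $w_t\in\Delta^d$, $c_t:\Delta^d\times\mathcal{I}\to\mathbb{R}$; given $x_t$ and control $u_t\in\mathcal{I}$, $x_{t+1}=(1-\gamma_t)[(1-\|u_t\|_1)Ax_t+Bu_t]+\gamma_tw_t$, and cost $c_t(x_t,u_t)$ is incurred. Online protocol: $A,B$ known; at each step the controller observes $x_t$ (and $\gamma_t$ once it is realized), plays $u_t\in\mathcal{I}$, then observes $c_t$; perturbations $w_t$ are unknown. Cost assumption: $c_t$ convex and $|c_t(x,u)-c_t(x',u')|\le L(\|x-x'\|_1+\|u-u'\|_1)$. $\mathcal{K}(\mathcal{I})$ is the set of linear time-invariant policies $x\mapsto Kx$ with $K\in\bigcup_{\alpha\in[0,\alpha_{\mathrm{ub}}]}\mathbb{S}^d_\alpha$, and $(x_t^{\mathcal{L},K},u_t^{\mathcal{L},K})$ are the iterates from playing $u_t=Kx_t$ at all times. $\Omega(T)$ is as $T\to\infty$. *)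

From HB Require Import structures.
From mathcomp Require Import all_boot all_order all_algebra.
From mathcomp Require Import all_classical all_reals all_analysis.
Set Implicit Arguments. Unset Strict Implicit. Unset Printing Implicit Defensive.
Import Order.TTheory GRing.Theory Num.Theory.
Local Open Scope ring_scope.
Local Open Scope classical_set_scope.

Section SimplexLDS.
Variable R : realType.

Definition norm1 d (v : 'cV[R]_d) : R := \sum_(i < d) `|v i 0|.

Definition in_simplex_scaled d (a : R) (v : 'cV[R]_d) : Prop :=
  (forall i, 0 <= v i 0) /\ \sum_(i < d) v i 0 = a.

Definition in_simplex d (v : 'cV[R]_d) : Prop := in_simplex_scaled 1 v.

Definition valid_control d (aub : R) (u : 'cV[R]_d) : Prop :=
  exists2 a : R, 0 <= a <= aub & in_simplex_scaled a u.

Definition col_stochastic d (M : 'M[R]_d) : Prop :=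
  (forall i j, 0 <= M i j) /\ (forall j, \sum_(i < d) M i j = 1).

Definition lin_policy_class d (aub : R) (K : 'M[R]_d) : Prop :=
  exists (a : R) (M : 'M[R]_d), [/\ 0 <= a <= aub, col_stochastic M & K = a *: M].

(* cost functions c_t : Delta^d x I -> R, given as total functions *)
Definition cost_fn d := 'cV[R]_d -> 'cV[R]_d -> R.

Definition convex_cost d (aub : R) (c : cost_fn d) : Prop :=
  forall (x x' u u' : 'cV[R]_d) (l : R),
    in_simplex x -> in_simplex x' -> valid_control aub u -> valid_control aub u' ->
    0 <= l <= 1 ->
    c (l *: x + (1 - l) *: x') (l *: u + (1 - l) *: u') <= l * c x u + (1 - l) * c x' u'.

Definition lipschitz_cost d (aub L : R) (c : cost_fn d) : Prop :=
  forall (x x' u u' : 'cV[R]_d),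
    in_simplex x -> in_simplex x' -> valid_control aub u -> valid_control aub u' ->
    `|c x u - c x' u'| <= L * (norm1 (x - x') + norm1 (u - u')).

Definition lds_step d (A B : 'M[R]_d) (x u w : 'cV[R]_d) (g : R) : 'cV[R]_d :=
  (1 - g) *: ((1 - norm1 u) *: (A *m x) + B *m u) + g *: w.

(* Time is 0-indexed: x1 is the state at index 0,
   g t, w t, c t are gamma_{t+1}, w_{t+1}, c_{t+1}. *)
Definition valid_lds d (aub L : R) (A B : 'M[R]_d) (x1 : 'cV[R]_d)
    (g : nat -> R) (w : nat -> 'cV[R]_d) (c : nat -> cost_fn d) : Prop :=
  col_stochastic A /\ col_stochastic B /\ in_simplex x1 /\
  (forall t, 0 <= g t <= 1) /\ (forall t, in_simplex (w t)) /\
  (forall t, convex_cost aub (c t)) /\ (forall t, lipschitz_cost aub L (c t)).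

(* A deterministic online policy: at (0-indexed) time t it sees the states
   x_0..x_t, its past controls u_0..u_{t-1}, the realized g_0..g_{t-1} and the
   revealed cost functions c_0..c_{t-1}, and outputs u_t. *)
Definition policy d :=
  nat -> seq 'cV[R]_d -> seq 'cV[R]_d -> seq R -> seq (cost_fn d) -> 'cV[R]_d.

(* An algorithm: on input (d, A, B, I (given by aub), T) returns a policy. *)
Definition algorithm := forall d : nat, 'M[R]_d -> 'M[R]_d -> R -> nat -> policy d.

Section Run.
Variables (d : nat) (pol : policy d) (A B : 'M[R]_d) (x1 : 'cV[R]_d)
  (g : nat -> R) (w : nat -> 'cV[R]_d) (c : nat -> cost_fn d).

(* (x_0..x_t, u_0..u_{t-1}) *)
Fixpoint run (t : nat) : seq 'cV[R]_d * seq 'cV[R]_d :=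
  match t with
  | 0 => ([:: x1], [::])
  | t'.+1 =>
      let: (xs, us) := run t' in
      let xt := last x1 xs in
      let ut := pol t' xs us (map g (iota 0 t')) (map c (iota 0 t')) in
      (rcons xs (lds_step A B xt ut (w t') (g t')), rcons us ut)
  end.

Definition alg_state (t : nat) : 'cV[R]_d := last x1 (run t).1.

Definition alg_control (t : nat) : 'cV[R]_d :=
  pol t (run t).1 (run t).2 (map g (iota 0 t)) (map c (iota 0 t)).

Definition alg_cost (T : nat) : R :=
  \sum_(t < T) c t (alg_state t) (alg_control t).

Fixpoint lin_state (K : 'M[R]_d) (t : nat) : 'cV[R]_d :=
  match t with
  | 0 => x1
  | t'.+1 => lds_step A B (lin_state K t') (K *m lin_state K t') (w t') (g t')
  end.

Definition lin_cost (K : 'M[R]_d) (T : nat) : R :=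
  \sum_(t < T) c t (lin_state K t) (K *m lin_state K t).
End Run.

(* A randomized algorithm: a deterministic algorithm for each random seed om
   drawn from a probability space (Omega, P). It always plays valid controls. *)
Definition alg_valid (T0 : Type) (Alg : T0 -> algorithm) : Prop :=
  forall om d A B (aub : R) T t xs us gs cs, 0 < aub < 1 ->
    valid_control aub (Alg om d A B aub T t xs us gs cs).

Definition regret_guarantee (dO : measure_display) (Omega : measurableType dO)
    (P : probability Omega R) (Alg : Omega -> algorithm)
    (f : nat -> R -> R -> nat -> R) : Prop :=
  forall (d T : nat) (aub L : R) (A B : 'M[R]_d) (x1 : 'cV[R]_d)
    (g : nat -> R) (w : nat -> 'cV[R]_d) (c : nat -> cost_fn d),
    0 < aub < 1 -> 0 < L -> valid_lds aub L A B x1 g w c ->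
    let J := fun om => alg_cost (Alg om d A B aub T) A B x1 g w c T in
    measurable_fun setT J /\
    (\int[P]_om (J om)%:E
      - (inf ((fun K => lin_cost A B x1 g w c K T) @` lin_policy_class aub))%:E
      <= (f d L aub T)%:E)%E.

End SimplexLDS.

(* Hard instances: A = B = I, no perturbation, start at the uniform state of
   Delta^2, and pay |x_k| in the last m rounds only, where k is one of the two
   coordinates p, q.  Both instances reveal the same costs before round T - m,
   so for every seed the algorithm reaches the same state at time T - m in
   both.  A control of norm at most aub shrinks a coordinate by a factor at
   least 1 - aub per round, so throughout the window the two coordinates keep
   a fraction 1 - m aub of their (joint) mass at time T - m, and the two window
   costs add up to at least m (1 - m aub).  The linear policy aub e_q 1^T, on
   the other hand, drains coordinate p geometrically, so on instance p the best
   linear policy pays at most m (1 - aub)^(T-m) / 2, and symmetrically on q.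
   Hence twice the regret bound is at least m (1 - m aub - (1 - aub)^(T-m)),
   which is of order T / beta for aub = beta / T and m = T / (4 beta). *)

From HB Require Import structures.
From mathcomp Require Import all_boot all_order all_algebra.
From mathcomp Require Import all_classical all_reals all_analysis.
From mathcomp Require Import ring lra.
Set Implicit Arguments. Unset Strict Implicit. Unset Printing Implicit Defensive.
Import Order.TTheory GRing.Theory Num.Theory.
Local Open Scope ring_scope.

Section Bernoulli.
Context {R : realType}.
Implicit Types (a : R) (n : nat).

Lemma bernoulli_lower a n : a <= 1 -> 1 - n%:R * a <= (1 - a) ^+ n.
Proof.
move=> a1; elim: n => [|n IH]; first by rewrite mul0r subr0 expr0.
have n0 : 0 <= n%:R :> R by [].
rewrite exprS -natr1; apply: le_trans (ler_wpM2l _ IH); [nra | lra].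
Qed.

Lemma bernoulli_upper a n : a <= 1 -> (1 - a) ^+ n * (1 + n%:R * a) <= 1.
Proof.
move=> a1; elim: n => [|n IH]; first by rewrite mul0r addr0 expr0 mul1r.
have n0 : 0 <= n%:R :> R by [].
have Xn0 : 0 <= (1 - a) ^+ n by apply: exprn_ge0; lra.
have step : (1 - a) * (1 + (n%:R + 1) * a) <= 1 + n%:R * a by nra.
rewrite exprS -natr1 [_ * (1 - a) ^+ n]mulrC -mulrA; apply: le_trans IH.
by rewrite ler_wpM2l.
Qed.

End Bernoulli.

Lemma big_window (V : nmodType) T m (F : nat -> V) : (m <= T)%N ->
  \sum_(t < T) (if (T - m <= t)%N then F t else 0) = \sum_(T - m <= t < T) F t.
Proof.
move=> le_mT; pose G t := if (T - m <= t)%N then F t else 0.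
rewrite -(big_mkord xpredT G) (big_cat_nat (n := T - m)) ?leq_subr //=.
rewrite big_nat big1 ?add0r => [|t /andP[_ lt_t]]; last by rewrite /G leqNgt lt_t.
by apply: eq_big_nat => t /andP[le_t _]; rewrite /G le_t.
Qed.

Lemma big_ord2_neq (V : nmodType) (p q : 'I_2) (F : 'I_2 -> V) :
  p != q -> \sum_(i < 2) F i = F p + F q.
Proof.
rewrite big_ord_recr big_ord1 /=.
case: p q => [[|[|p]] lt_p] [[|[|q]] lt_q] //= _.
- by congr (F _ + F _); apply: val_inj.
- by rewrite addrC; congr (F _ + F _); apply: val_inj.
Qed.

Section Simplex.
Context {R : realType}.

Lemma norm1_ge0 d (v : 'cV[R]_d) : 0 <= norm1 v.
Proof. exact: sumr_ge0. Qed.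

Lemma ler_norm1 d (v : 'cV[R]_d) k : `|v k 0| <= norm1 v.
Proof. by rewrite /norm1 (bigD1 k) //= lerDl sumr_ge0. Qed.

Lemma in_simplex_scaled_norm1 d (a : R) (u : 'cV[R]_d) :
  in_simplex_scaled a u -> norm1 u = a.
Proof. by case=> u_ge0 <-; apply: eq_bigr => i _; rewrite ger0_norm. Qed.

Lemma valid_control_norm1 d (aub : R) (u : 'cV[R]_d) : valid_control aub u ->
  [/\ forall i, 0 <= u i 0, \sum_(i < d) u i 0 = norm1 u & norm1 u <= aub].
Proof.
case=> a /andP[_ a_le] u_simplex; rewrite (in_simplex_scaled_norm1 u_simplex).
by case: u_simplex.
Qed.

Lemma scaled_delta_simplex d (a : R) (q : 'I_d) :
  0 <= a -> in_simplex_scaled a (a *: delta_mx q 0).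
Proof.
move=> a_ge0; split=> [i|]; first by rewrite !mxE mulr_ge0.
rewrite (bigD1 q) //= big1 => [|i ne_iq]; first by rewrite !mxE !eqxx mulr1 addr0.
by rewrite !mxE (negbTE ne_iq) mulr0.
Qed.

Lemma id_col_stochastic d : col_stochastic (1%:M : 'M[R]_d).
Proof.
split=> [i j|j]; first by rewrite mxE; case: (i == j).
rewrite (bigD1 j) //= big1 ?mxE ?eqxx ?addr0 // => i /negbTE ne_ij.
by rewrite mxE ne_ij.
Qed.

Definition collapse_mx d (q : 'I_d) : 'M[R]_d := \matrix_(i, j) (i == q)%:R.

Lemma collapse_mx_stochastic d (q : 'I_d) : col_stochastic (collapse_mx q).
Proof.
split=> [i j|j]; first by rewrite mxE; case: (i == q).
rewrite (bigD1 q) //= big1 ?mxE ?eqxx ?addr0 // => i /negbTE ne_iq.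
by rewrite mxE ne_iq.
Qed.

Lemma mul_collapse_mx d (q : 'I_d) (x : 'cV[R]_d) :
  collapse_mx q *m x = (\sum_j x j 0) *: delta_mx q 0.
Proof.
apply/matrixP => i k; rewrite (ord1 k) !mxE eqxx andbT mulr_suml.
by apply: eq_bigr => j _; rewrite mxE mulrC.
Qed.

End Simplex.

Section Mixing.
Context {R : realType}.

Definition mix_step d (x u : 'cV[R]_d) : 'cV[R]_d := (1 - norm1 u) *: x + u.

Lemma lds_step_id d (x u w : 'cV[R]_d) : lds_step 1%:M 1%:M x u w 0 = mix_step x u.
Proof. by rewrite /lds_step subr0 scale1r !mul1mx scale0r addr0. Qed.

Lemma mix_step_simplex d (aub : R) (x u : 'cV[R]_d) :
  aub <= 1 -> in_simplex x -> valid_control aub u -> in_simplex (mix_step x u).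
Proof.
move=> aub_le1 [x_ge0 x_sum] /valid_control_norm1[u_ge0 u_sum u_le]; split=> [i|].
  by rewrite !mxE addr_ge0 // mulr_ge0 // subr_ge0 (le_trans u_le).
rewrite (eq_bigr (fun i => (1 - norm1 u) * x i 0 + u i 0)) => [|i _].
  by rewrite big_split /= -mulr_sumr x_sum u_sum; lra.
by rewrite !mxE.
Qed.

Lemma lin_state_collapse d (x1 : 'cV[R]_d) (w : nat -> 'cV[R]_d) (a : R)
    (p q : 'I_d) t :
  0 <= a <= 1 -> p != q -> in_simplex x1 ->
  let X := lin_state 1%:M 1%:M x1 (fun=> 0) w (a *: collapse_mx q) in
  in_simplex (X t) /\ X t p 0 = (1 - a) ^+ t * x1 p 0.
Proof.
move=> /andP[a_ge0 a_le1] ne_pq x1_simplex X; elim: t => [|t [X_simplex X_p]].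
  by rewrite expr0 mul1r.
have KX : a *: collapse_mx q *m X t = a *: delta_mx q 0.
  by rewrite -scalemxAl mul_collapse_mx (proj2 X_simplex) scale1r.
have K_simplex := scaled_delta_simplex q a_ge0.
rewrite /X /= -/X lds_step_id KX; split.
  by apply: mix_step_simplex a_le1 X_simplex _; exists a; rewrite ?a_ge0 ?lexx.
rewrite !mxE (in_simplex_scaled_norm1 K_simplex) (negbTE ne_pq) mulr0 addr0.
by rewrite X_p exprS mulrA.
Qed.

Variables (d : nat) (aub : R) (X U : nat -> 'cV[R]_d).
Hypotheses (aub_le1 : aub <= 1) (X0_simplex : in_simplex (X 0))
  (U_valid : forall t, valid_control aub (U t))
  (X_step : forall t, X t.+1 = mix_step (X t) (U t)).

Lemma mixing_simplex t : in_simplex (X t).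
Proof. by elim: t => // t IH; rewrite X_step; apply: mix_step_simplex aub_le1 IH _. Qed.

Lemma mixing_decay s j k : (1 - aub) ^+ j * X s k 0 <= X (s + j) k 0.
Proof.
elim: j => [|j IH]; first by rewrite expr0 mul1r addn0.
have [U_ge0 _ U_le] := valid_control_norm1 (U_valid (s + j)).
have [X_ge0 _] := mixing_simplex (s + j).
have := X_ge0 k; have := U_ge0 k.
rewrite addnS X_step !mxE exprS -mulrA.
have : (1 - aub) * ((1 - aub) ^+ j * X s k 0) <= (1 - aub) * X (s + j) k 0.
  by rewrite ler_wpM2l // subr_ge0.
nra.
Qed.

Lemma mixing_window s j m k : (j <= m)%N ->
  (1 - m%:R * aub) * X s k 0 <= X (s + j) k 0.
Proof.
move=> le_jm; apply: le_trans (mixing_decay s j k).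
have [X_ge0 _] := mixing_simplex s.
have [_ _ U_le] := valid_control_norm1 (U_valid 0).
have aub_ge0 : 0 <= aub := le_trans (norm1_ge0 _) U_le.
apply: ler_wpM2r => //; apply: le_trans (bernoulli_lower m aub_le1) _.
by apply: ler_wiXn2l => //; rewrite ?subr_ge0 // lerBlDr lerDl.
Qed.

End Mixing.

Lemma mixing_pair_ge {R : realType} (p q : 'I_2) (aub : R) s m
    (Xp Xq Up Uq : nat -> 'cV[R]_2) :
  p != q -> aub <= 1 ->
  in_simplex (Xp 0) -> (forall t, valid_control aub (Up t)) ->
  (forall t, Xp t.+1 = mix_step (Xp t) (Up t)) ->
  in_simplex (Xq 0) -> (forall t, valid_control aub (Uq t)) ->
  (forall t, Xq t.+1 = mix_step (Xq t) (Uq t)) ->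
  Xp s = Xq s -> forall j, (j <= m)%N ->
  1 - m%:R * aub <= Xp (s + j) p 0 + Xq (s + j) q 0.
Proof.
move=> ne_pq aub_le1 Xp0 Up_valid Xp_step Xq0 Uq_valid Xq_step eq_s j le_jm.
have [_ Xq_sum] := mixing_simplex aub_le1 Xq0 Uq_valid Xq_step s.
rewrite (big_ord2_neq _ ne_pq) in Xq_sum.
have := mixing_window aub_le1 Xp0 Up_valid Xp_step s p le_jm.
have := mixing_window aub_le1 Xq0 Uq_valid Xq_step s q le_jm.
rewrite eq_s; nra.
Qed.

Section Run.
Context {R : realType}.
Variables (d : nat) (pol : policy R d) (A B : 'M[R]_d) (x1 : 'cV[R]_d)
  (g : nat -> R) (w : nat -> 'cV[R]_d).

Lemma eq_run (c c' : nat -> cost_fn R d) t :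
  (forall i, (i < t)%N -> c i = c' i) ->
  run pol A B x1 g w c t = run pol A B x1 g w c' t.
Proof.
elim: t => [//|t IH] eq_c /=.
rewrite IH => [|i lt_it]; last exact/eq_c/ltnW.
suff -> : map c (iota 0 t) = map c' (iota 0 t) by [].
apply/eq_in_map => i; rewrite mem_iota add0n => /andP[_ lt_it].
exact/eq_c/ltnW.
Qed.

Lemma alg_stateS c t : alg_state pol A B x1 g w c t.+1 =
  lds_step A B (alg_state pol A B x1 g w c t) (alg_control pol A B x1 g w c t)
    (w t) (g t).
Proof.
rewrite /alg_state /alg_control /=.
by case: (run _ _ _ _ _ _ _ t) => xs us; rewrite last_rcons.
Qed.

End Run.

Section Instance.
Context {R : realType}.
Local Open Scope classical_set_scope.

Definition window_cost (k : 'I_2) (T m : nat) : nat -> cost_fn R 2 :=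
  fun t x _ => if (T - m <= t)%N then `|x k 0| else 0.

Lemma window_cost_ge0 k T m t x u : 0 <= window_cost k T m t x u.
Proof. by rewrite /window_cost; case: ifP. Qed.

Lemma window_cost_convex k T m aub t : convex_cost aub (window_cost k T m t).
Proof.
move=> x x' u u' l _ _ _ _ /andP[l_ge0 l_le1]; rewrite /window_cost.
case: ifP => _; last by rewrite !mulr0 addr0.
rewrite !mxE; apply: le_trans (ler_normD _ _) _.
by rewrite !normrM (ger0_norm l_ge0) [`|1 - l|]ger0_norm ?subr_ge0.
Qed.

Lemma window_cost_lipschitz k T m aub t :
  lipschitz_cost aub 1 (window_cost k T m t).
Proof.
move=> x x' u u' _ _ _ _; rewrite /window_cost mul1r.
case: ifP => _; last by rewrite subrr normr0 addr_ge0 ?norm1_ge0.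
apply: le_trans (ler_dist_dist _ _) _.
have := ler_norm1 (x - x') k; rewrite !mxE => /le_trans; apply.
by rewrite lerDl norm1_ge0.
Qed.

Definition uniform2 : 'cV[R]_2 := const_mx (1 / 2).

Lemma uniform2_simplex : in_simplex uniform2.
Proof.
split=> [i|]; first by rewrite mxE.
by rewrite big_ord_recr big_ord1 /= !mxE; field.
Qed.

Lemma window_lds_valid k T m aub : valid_lds aub 1 1%:M 1%:M uniform2
  (fun=> 0) (fun=> uniform2) (window_cost k T m).
Proof.
split; first exact: id_col_stochastic.
split; first exact: id_col_stochastic.
split; first exact: uniform2_simplex.
split; first by move=> _; rewrite lexx ler01.
split; first by move=> _; exact: uniform2_simplex.
by split=> t; [exact: window_cost_convex | exact: window_cost_lipschitz].
Qed.

Lemma window_cost_sum k T m (X U : nat -> 'cV[R]_2) : (m <= T)%N ->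
  \sum_(t < T) window_cost k T m t (X t) (U t) = \sum_(T - m <= t < T) `|X t k 0|.
Proof. exact: (big_window (fun t => `|X t k 0|)). Qed.

Lemma lin_window_inf_le (p q : 'I_2) (aub : R) T m :
  p != q -> 0 <= aub <= 1 -> (m <= T)%N ->
  inf ((fun K => lin_cost 1%:M 1%:M uniform2 (fun=> 0) (fun=> uniform2)
                   (window_cost p T m) K T) @` lin_policy_class aub)
  <= m%:R * ((1 - aub) ^+ (T - m) / 2).
Proof.
move=> ne_pq aub01 le_mT; have /andP[aub_ge0 aub_le1] := aub01.
set costs := _ @` _.
have costs_ge0 : has_lbound costs.
  by exists 0 => _ [K _ <-]; apply: sumr_ge0 => t _; exact: window_cost_ge0.
have collapse_in : lin_policy_class aub (aub *: collapse_mx q).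
  exists aub, (collapse_mx q); split; rewrite ?aub_ge0 ?lexx //.
  exact: collapse_mx_stochastic.
apply: le_trans (ge_inf costs_ge0 (ex_intro2 _ _ _ collapse_in erefl)) _.
rewrite /lin_cost (window_cost_sum _ _ (fun t => _ *m lin_state _ _ _ _ _ _ t)) //.
apply: (le_trans (y := \sum_(T - m <= t < T) ((1 - aub) ^+ (T - m) / 2))).
  rewrite !big_nat; apply: ler_sum => t /andP[le_t _].
  have [_ ->] := lin_state_collapse (fun=> uniform2) t aub01 ne_pq uniform2_simplex.
  rewrite mxE ger0_norm ?mulr_ge0 ?exprn_ge0 ?subr_ge0 // mul1r ler_wpM2r //.
  by apply: ler_wiXn2l; rewrite ?subr_ge0 ?lerBlDr ?lerDl.
by rewrite sumr_const_nat subKn // mulr_natl.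
Qed.

Lemma alg_window_costs_ge (pol : policy R 2) (aub : R) T m (p q : 'I_2) :
  p != q -> aub <= 1 -> (m <= T)%N ->
  (forall t xs us gs cs, valid_control aub (pol t xs us gs cs)) ->
  m%:R * (1 - m%:R * aub) <=
    alg_cost pol 1%:M 1%:M uniform2 (fun=> 0) (fun=> uniform2) (window_cost p T m) T
  + alg_cost pol 1%:M 1%:M uniform2 (fun=> 0) (fun=> uniform2) (window_cost q T m) T.
Proof.
move=> ne_pq aub_le1 le_mT pol_valid.
pose X k := alg_state pol 1%:M 1%:M uniform2 (fun=> 0) (fun=> uniform2)
  (window_cost k T m).
pose U k := alg_control pol 1%:M 1%:M uniform2 (fun=> 0) (fun=> uniform2)
  (window_cost k T m).
have U_valid k t : valid_control aub (U k t) by apply: pol_valid.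
have X_step k t : X k t.+1 = mix_step (X k t) (U k t).
  by rewrite /X alg_stateS lds_step_id.
have X_agree : X p (T - m)%N = X q (T - m)%N.
  rewrite /X /alg_state (eq_run _ _ _ _ _ _ (c' := window_cost q T m)) // => i lt_i.
  by rewrite /window_cost leqNgt lt_i.
rewrite /alg_cost !window_cost_sum // -big_split /=.
apply: (le_trans (y := \sum_(T - m <= t < T) (1 - m%:R * aub))).
  by rewrite sumr_const_nat subKn // mulr_natl.
rewrite !big_nat; apply: ler_sum => t /andP[le_t lt_t].
have -> : t = (T - m + (t - (T - m)))%N by rewrite subnKC.
apply: le_trans (lerD (ler_norm _) (ler_norm _)).
apply: (mixing_pair_ge ne_pq aub_le1 uniform2_simplex (U_valid p) (X_step p)
  uniform2_simplex (U_valid q) (X_step q) X_agree).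
by rewrite leq_subLR subnK // ltnW.
Qed.

End Instance.

Section Expectation.
Context {R : realType} (dO : measure_display) (Omega : measurableType dO).
Variable P : probability Omega R.
Local Open Scope ereal_scope.

Lemma cst_le_integralD (J1 J2 : Omega -> R) (k : R) :
  measurable_fun setT J1 -> measurable_fun setT J2 ->
  (forall om, (0 <= J1 om)%R) -> (forall om, (0 <= J2 om)%R) ->
  (forall om, (k <= J1 om + J2 om)%R) ->
  k%:E <= \int[P]_om (J1 om)%:E + \int[P]_om (J2 om)%:E.
Proof.
move=> J1_meas J2_meas J1_ge0 J2_ge0 k_le.
have J1E_meas := proj2 (measurable_realfun.measurable_EFinP _ J1) J1_meas.
have J2E_meas := proj2 (measurable_realfun.measurable_EFinP _ J2) J2_meas.
have [k_lt0|k_ge0] := ltP k 0%R.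
  apply: le_trans (_ : 0 <= _); first by rewrite lee_fin ltW.
  by apply: adde_ge0; apply: integral_ge0 => om _; rewrite lee_fin.
rewrite -ge0_integralD // => [|om _|om _]; rewrite ?lee_fin //.
rewrite -[k%:E]mule1 -(probability_setT P) -integral_cst //.
apply: ge0_le_integral => // [|om _]; first exact: emeasurable_funD.
by rewrite -EFinD lee_fin.
Qed.

End Expectation.

Section LowerBound.
Context {R : realType} (dO : measure_display) (Omega : measurableType dO).
Variables (P : probability Omega R) (Alg : Omega -> algorithm R)
  (f : nat -> R -> R -> nat -> R).
Hypotheses (Alg_valid : alg_valid Alg) (Alg_regret : regret_guarantee P Alg f).

Lemma regret_window_lower_bound (aub : R) T m : 0 < aub < 1 -> (m <= T)%N ->
  m%:R * (1 - m%:R * aub - (1 - aub) ^+ (T - m)) <= 2 * f 2%N 1 aub T.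
Proof.
move=> aub01 le_mT; have aub01' : 0 <= aub <= 1 by rewrite !ltW //; case/andP: aub01.
have /andP[_ aub_le1] := aub01'.
pose p : 'I_2 := ord0; pose q : 'I_2 := ord_max.
have ne_pq : p != q by [].
have ne_qp : q != p by [].
pose J k om := alg_cost (@Alg om 2%N 1%:M 1%:M aub T) 1%:M 1%:M uniform2
  (fun=> 0) (fun=> uniform2) (window_cost k T m) T.
have J_ge0 k om : 0 <= J k om by apply: sumr_ge0 => t _; exact: window_cost_ge0.
have regret k := @Alg_regret 2%N T aub 1 _ _ _ _ _ _ aub01 ltr01
  (window_lds_valid k T m aub).
have [Jp_meas regret_p] := regret p; have [Jq_meas regret_q] := regret q.
have Alg_om_valid om t xs us gs cs :=
  @Alg_valid om 2%N 1%:M 1%:M aub T t xs us gs cs aub01.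
have := cst_le_integralD P Jp_meas Jq_meas (J_ge0 p) (J_ge0 q)
  (fun om => alg_window_costs_ge ne_pq aub_le1 le_mT (Alg_om_valid om)).
rewrite leeBlDr // in regret_p; rewrite leeBlDr // in regret_q.
move=> /le_trans /(_ (leeD regret_p regret_q)); rewrite -EFinD lee_fin.
have := lin_window_inf_le ne_pq aub01' le_mT.
have := lin_window_inf_le ne_qp aub01' le_mT.
lra.
Qed.

End LowerBound.

Lemma window_size_bound {R : realType} (beta : R) T :
  8 <= beta -> 8 * beta < T%:R ->
  let aub := beta / T%:R in let m := Num.truncn (T%:R / (4 * beta)) in
  [/\ 0 < aub < 1, (m <= T)%N &
      T%:R / (16 * beta) <= m%:R * (1 - m%:R * aub - (1 - aub) ^+ (T - m))].
Proof.
move=> le8b ltT aub m; set tR := T%:R in ltT *.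
have b_gt0 : 0 < beta by lra.
have tR_gt0 : 0 < tR by lra.
have aub_gt0 : 0 < aub by rewrite divr_gt0.
have aub_lt : aub < 1 / 8 by rewrite ltr_pdivrMr // mulrC mulrA; lra.
have aub_le1 : aub <= 1 by lra.
have m_le : m%:R <= tR / (4 * beta) by rewrite truncn_le divr_ge0 //; lra.
have m_gt : tR / (4 * beta) < m%:R + 1 by rewrite natr1 truncnS_gt.
have ratio_ge1 : 1 <= tR / (8 * beta) by rewrite ler_pdivlMr; lra.
have ratioE : tR / (4 * beta) = 2 * (tR / (8 * beta)) by field; lra.
have goalE : tR / (16 * beta) = (tR / (8 * beta)) / 2 by field; lra.
have m_aub : m%:R * aub <= 1 / 4.
  by rewrite /aub mulrA ler_pdivrMr // -ler_pdivlMr ?mulr_gt0 //; lra.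
have le_mT : (m <= T)%N.
  rewrite -(ler_nat R) -/tR; apply: le_trans m_le _; rewrite ler_pdivrMr; nra.
have rest_ge7 : 7 <= (T - m)%:R * aub.
  rewrite natrB // mulrBl -/tR {1}/aub mulrCA divff ?mulr1; lra.
have X_le : (1 - aub) ^+ (T - m) <= 1 / 8.
  have := bernoulli_upper (T - m) aub_le1.
  have : 0 <= (1 - aub) ^+ (T - m) by rewrite exprn_ge0 // subr_ge0; lra.
  nra.
split=> //; first by rewrite aub_gt0; lra.
rewrite goalE; rewrite ratioE in m_gt; nra.
Qed.

Unset Implicit Arguments.

Theorem theorem6 (R : realType) (dO : measure_display) (Omega : measurableType dO)
    (P : probability Omega R) (Alg : Omega -> algorithm R)
    (f : nat -> R -> R -> nat -> R) :
  alg_valid Alg -> regret_guarantee P Alg f ->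
  exists beta0 : R, forall beta : R, beta0 <= beta ->
    exists2 c : R, 0 < c &
      exists T0 : nat, forall T : nat, (T0 <= T)%N ->
        c * T%:R <= f 2%N 1 (beta / T%:R) T.
Proof.
move=> Alg_valid Alg_regret; exists 8 => beta le8b.
have b_gt0 : 0 < beta by lra.
exists (1 / (32 * beta)); first by rewrite divr_gt0 // mulr_gt0.
exists (Num.truncn (8 * beta)).+1 => T le_T.
have ltT : 8 * beta < T%:R by apply: lt_le_trans (truncnS_gt _) _; rewrite ler_nat.
have [aub01 le_mT bound] := window_size_bound le8b ltT.
have := regret_window_lower_bound Alg_valid Alg_regret aub01 le_mT.
have -> : 1 / (32 * beta) * T%:R = T%:R / (16 * beta) / 2 by field; lra.
lra.
Qed.
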